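(* Let $\alpha,\beta,\beta'$ be blueprints, $\chi$ a formula, and $a_1,\dots,a_p,b_1,\dots,b_p$ addresses with $\{a_1,\dots,a_p\}=\{b_1,\dots,b_p\}$. If $\alpha\rhd^{a_1}_\chi\alpha_1\rhd^{a_2}_\chi\cdots\rhd^{a_p}_\chi\beta$ and $\alpha\rhd^{b_1}_\chi\alpha'_1\rhd^{b_2}_\chi\cdots\rhd^{b_p}_\chi\beta'$ for some intermediate blueprints, then $\beta=\beta'$.
   Context: Addresses are finite sequences of positive integers, ordered by the prefix order $\le$ ($a<b$: strict prefix), with concatenation $\cdot$ and empty address $\varepsilon$. A partial tree is a function whose domain is a set of addresses; for a partial tree $\pi$ and address $a$, $\pi|_a$ is the partial tree $c\mapsto\pi(a\cdot c)$ on $\{c: a\cdot c\in\mathrm{dom}(\pi)\}$. Let $\mathfrak S$ be the signature consisting of all formulas (arity 0) and, for each formula $\phi$, a binary symbol $@_\phi$. A blueprint is a finite partial tree $\alpha$ with values in $\mathfrak S$ such that whenever $\alpha(a)=@_\phi$, both $\alpha|_{a\cdot(1)}$ and $\alpha|_{a\cdot(2)}$ have non-empty domain. Notation: $\emptyset_{\mathbb B}$ is the empty blueprint; a formula $\phi$ also denotes the blueprint $\varepsilon\mapsto\phi$; for non-empty $\alpha_1,\alpha_2$, $@_\phi(\alpha_1,\alpha_2)$ is the blueprint $\alpha$ with $\alpha(\varepsilon)=@_\phi$, $\alpha|_{(1)}=\alpha_1$, $\alpha|_{(2)}=\alpha_2$; for a sequence $\bar a=(a_1,\dots,a_k)$ of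 pairwise incomparable addresses, $*_{\bar a}(\alpha_1,\dots,\alpha_k)$ is the blueprint of minimal domain whose restriction at each $a_i$ is $\alpha_i$; $*(\alpha_1,\dots,\alpha_k)=*_{((1),\dots,(k))}(\alpha_1,\dots,\alpha_k)$. Extraction $\alpha\rhd^a_\phi\beta$ is defined inductively: (1) $\phi\rhd^\varepsilon_\phi\emptyset_{\mathbb B}$; (2) if $\alpha\rhd^a_\phi\beta$ and $\gamma,\alpha$ are non-empty, then $@_\psi(\gamma,\alpha)\rhd^{(2)\cdot a}_\phi *(\gamma,\beta)$; (3) if $\alpha\rhd^a_\phi\beta$, $b\ne\varepsilon$ and $(b,c_1,\dots,c_k)$ are pairwise incomparable, then $*_{(b,c_1,\dots,c_k)}(\alpha,\gamma_1,\dots,\gamma_k)\rhd^{b\cdot a}_\phi *_{(b,c_1,\dots,c_k)}(\beta,\gamma_1,\dots,\gamma_k)$. *)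

From mathcomp Require Import all_boot.
From Stdlib Require List.
Set Implicit Arguments. Unset Strict Implicit. Unset Printing Implicit Defensive.

Section Blueprints.
Variable F : Type. (* the type of formulas *)

(* the signature: formulas (arity 0) and binary symbols @_phi *)
Inductive sym : Type := Form of F | App of F.

Definition address := seq nat.
Definition valid_address (a : address) : bool := all (fun n => 0 < n) a.

Definition ptree := address -> option sym.

Definition in_dom (pi : ptree) (a : address) : Prop := pi a <> None.
Definition nonempty (pi : ptree) : Prop := exists a, in_dom pi a.

Definition restr (pi : ptree) (a : address) : ptree := fun c => pi (a ++ c).

Definition is_blueprint (alpha : ptree) : Prop :=
  [/\ (exists s : seq address, forall a, in_dom alpha a -> a \in s),
      (forall a, in_dom alpha a -> valid_address a) &
      (forall a phi, alpha a = Some (App phi) ->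
          nonempty (restr alpha (rcons a 1)) /\ nonempty (restr alpha (rcons a 2)))].

Definition bp_empty : ptree := fun _ => None.

Definition bp_form (phi : F) : ptree :=
  fun a => if a is [::] then Some (Form phi) else None.

Definition bp_app (psi : F) (a1 a2 : ptree) : ptree :=
  fun a => match a with
           | [::] => Some (App psi)
           | 1 :: c => a1 c
           | 2 :: c => a2 c
           | _ => None
           end.

(* *_{(a_1,...,a_k)}(alpha_1,...,alpha_k), given as the list of pairs
   (a_i, alpha_i): the partial tree of minimal domain whose restriction at each
   a_i is alpha_i (for pairwise incomparable a_i) *)
Fixpoint bp_star (l : seq (address * ptree)) : ptree :=
  fun x => match l with
           | [::] => None
           | (b, al) :: l' =>
               if prefix b x then al (drop (size b) x) else bp_star l' x
           end.

Definition incomparable (a b : address) : bool := ~~ prefix a b && ~~ prefix b a.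

Inductive extr : ptree -> address -> F -> ptree -> Prop :=
| extr_form phi : extr (bp_form phi) [::] phi bp_empty
| extr_app alpha a phi beta gamma psi :
    extr alpha a phi beta -> is_blueprint gamma ->
    nonempty gamma -> nonempty alpha ->
    extr (bp_app psi gamma alpha) (2 :: a) phi (bp_star [:: ([:: 1], gamma); ([:: 2], beta)])
| extr_star alpha a phi beta b (cs : seq (address * ptree)) :
    extr alpha a phi beta -> b != [::] ->
    valid_address b -> all valid_address (map fst cs) ->
    (forall p, List.In p cs -> is_blueprint p.2) ->
    pairwise incomparable (b :: map fst cs) ->
    extr (bp_star ((b, alpha) :: cs)) (b ++ a) phi (bp_star ((b, beta) :: cs)).

Inductive extr_chain : ptree -> seq address -> F -> ptree -> Prop :=
| chain_nil alpha chi : extr_chain alpha [::] chi alpha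
| chain_cons alpha a chi alpha1 l beta :
    extr alpha a chi alpha1 -> extr_chain alpha1 l chi beta ->
    extr_chain alpha (a :: l) chi beta.

End Blueprints.

From mathcomp Require Import all_boot.
From Stdlib Require Import FunctionalExtensionality.

Set Implicit Arguments.
Unset Strict Implicit.
Unset Printing Implicit Defensive.

(* An extraction at address a deletes exactly the nodes on the path from the
   root to a (the prefixes of a) and keeps every other node of the tree. Hence
   a chain of extractions deletes the prefixes of its addresses and nothing
   else, so its result depends only on the set of addresses used. *)

Lemma prefix_cat_prefix (x b a : address) :
  prefix x (b ++ a) -> ~~ prefix b x -> prefix x b.
Proof.
elim: x b => [|y x IHx] [|z b] //=.
by case/andP=> /eqP <- x_ba; rewrite eqxx; exact: IHx.
Qed.

Lemma bp_star_prefix_None (F : Type) (cs : seq (address * ptree F)) b x :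
  all (incomparable b) (map fst cs) -> prefix x b -> bp_star cs x = None.
Proof.
elim: cs => [|[c gamma] cs IHcs] //= /andP[b_c b_cs] x_b.
case: ifP => [c_x | _]; last exact: IHcs.
by move: b_c; rewrite /incomparable (prefix_trans c_x x_b) andbF.
Qed.

Lemma extrE (F : Type) alpha a (phi : F) beta :
  extr alpha a phi beta ->
  forall x, beta x = if prefix x a then None else alpha x.
Proof.
elim=> {alpha a phi beta}.
- by move=> phi [|y x].
- move=> alpha a phi beta gamma psi _ IHbeta _ _ _ [|[|[|[|n]]] x] //=.
  + by rewrite prefix0s drop0.
  + by rewrite prefix0s drop0 IHbeta.
- move=> alpha a phi beta b cs _ IHbeta _ _ _ _ /andP[b_cs _] x /=.
  case: ifP => [b_x | b_x].
  + have [y ->] := prefixP b_x.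
    by rewrite drop_size_cat // IHbeta prefix_catr // eqxx.
  + case: ifP => // x_ba.
    apply: bp_star_prefix_None b_cs _.
    by apply: prefix_cat_prefix x_ba _; rewrite b_x.
Qed.

Lemma extr_chainE (F : Type) alpha l (chi : F) beta :
  extr_chain alpha l chi beta ->
  forall x, beta x = if has (prefix x) l then None else alpha x.
Proof.
elim=> {alpha l chi beta} //= alpha a chi alpha1 l beta alpha_a _ IHl x.
by rewrite IHl (extrE alpha_a); case: prefix; case: has.
Qed.

Theorem lemma2p14 (F : Type) (alpha beta beta' : ptree F) (chi : F)
    (la lb : seq address) :
  is_blueprint alpha -> is_blueprint beta -> is_blueprint beta' ->
  size la = size lb -> la =i lb ->
  extr_chain alpha la chi beta -> extr_chain alpha lb chi beta' ->
  beta = beta'.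
Proof.
move=> _ _ _ _ la_lb chain_a chain_b; apply: functional_extensionality => x.
by rewrite (extr_chainE chain_a) (extr_chainE chain_b) (eq_has_r la_lb).
Qed.
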